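(* Let $r\ge1$ be an integer and, for integers $m\ge0$, let $S_{r,m}=\sum_{k=0}^{m}J_{rk}^{(3)}$. Define the $4\times4$ matrices $$A_{r}=\begin{pmatrix} 1&0&0&0\\ 1&2^{r}+\epsilon_{r}&-(2^{r}\epsilon_{r}+1)&2^{r}\\0&1&0&0\\ 0&0&1&0 \end{pmatrix},\quad Q_{r,n}=\begin{pmatrix} J_{r}^{(3)}+2^{r}J_{-r}^{(3)}&0&0&0\\ S_{r,n}&J_{r(n+1)}^{(3)}&K_{r,n}^{(3)}&2^{r}J_{rn}^{(3)}\\S_{r,n-1}&J_{rn}^{(3)}&K_{r,n-1}^{(3)}&2^{r}J_{r(n-1)}^{(3)}\\ S_{r,n-2}&J_{r(n-1)}^{(3)}&K_{r,n-2}^{(3)}&2^{r}J_{r(n-2)}^{(3)} \end{pmatrix},$$ where $K_{r,m}^{(3)}=-(2^{r}\epsilon_{r}+1)J_{rm}^{(3)}+2^{r}J_{r(m-1)}^{(3)}$. Then for every integer $n\ge2$, $$J_{r}^{(3)}A_{r}^{n}+2^{r}J_{-r}^{(3)}A_{r}^{n-1}=Q_{r,n}.$$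
   Context: The third order Jacobsthal numbers are defined by $J_0^{(3)}=0$, $J_1^{(3)}=J_2^{(3)}=1$ and $J_{n+3}^{(3)}=J_{n+2}^{(3)}+J_{n+1}^{(3)}+2J_n^{(3)}$ for $n\ge0$, and are extended to all negative indices by running the recurrence backwards, i.e. $J_{n}^{(3)}=\tfrac12\big(J_{n+3}^{(3)}-J_{n+2}^{(3)}-J_{n+1}^{(3)}\big)$ for all $n<0$ (so $J_{-1}^{(3)}=0$, $J_{-2}^{(3)}=\tfrac12$, $J_{-3}^{(3)}=-\tfrac14$). Let $\omega_1=\frac{-1+\sqrt{-3}}{2}$, $\omega_2=\frac{-1-\sqrt{-3}}{2}$ be the roots of $x^2+x+1=0$ and $\epsilon_r=\omega_1^r+\omega_2^r$ (equal to $2$ if $3\mid r$, and $-1$ otherwise). *)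

From HB Require Import structures.
From mathcomp Require Import all_boot all_order all_algebra.
Set Implicit Arguments. Unset Strict Implicit. Unset Printing Implicit Defensive.
Import Order.TTheory GRing.Theory Num.Theory.
Local Open Scope ring_scope.

(* Forward triples (J_n, J_{n+1}, J_{n+2}) for n >= 0. *)
Fixpoint Jfwd (n : nat) : rat * rat * rat :=
  match n with
  | O => (0, 1, 1)
  | S n' => let: (a, b, c) := Jfwd n' in (b, c, c + b + 2 * a)
  end.

(* Backward triples (J_{-k}, J_{-k+1}, J_{-k+2}) for k >= 0, using
   J_n = (J_{n+3} - J_{n+2} - J_{n+1}) / 2. *)
Fixpoint Jbwd (k : nat) : rat * rat * rat :=
  match k with
  | O => (0, 1, 1)
  | S k' => let: (a, b, c) := Jbwd k' in ((c - b - a) / 2, a, b)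
  end.

Definition J (z : int) : rat :=
  match z with
  | Posz n => (Jfwd n).1.1
  | Negz k => (Jbwd k.+1).1.1   (* Negz k = -(k+1) *)
  end.

(* epsilon_r = omega_1^r + omega_2^r = 2 if 3 | r, -1 otherwise *)
Definition eps (r : nat) : rat := if (3 %| r)%N then 2 else -1.

Definition Ssum (r m : nat) : rat := \sum_(0 <= k < m.+1) J (r * k)%N.

Definition K (r : nat) (m : int) : rat :=
  - (2 ^+ r * eps r + 1) * J (r%:Z * m) + 2 ^+ r * J (r%:Z * (m - 1)).

Definition mx4 (rows : seq (seq rat)) : 'M[rat]_4 :=
  \matrix_(i < 4, j < 4) nth 0 (nth [::] rows i) j.

Definition A (r : nat) : 'M[rat]_4 :=
  mx4 [:: [:: 1; 0; 0; 0];
          [:: 1; 2 ^+ r + eps r; - (2 ^+ r * eps r + 1); 2 ^+ r];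
          [:: 0; 1; 0; 0];
          [:: 0; 0; 1; 0]].

Definition Q (r n : nat) : 'M[rat]_4 :=
  let R : int := r%:Z in
  let N : int := n%:Z in
  mx4 [:: [:: J R + 2 ^+ r * J (- R); 0; 0; 0];
          [:: Ssum r n; J (R * (N + 1)); K r N; 2 ^+ r * J (R * N)];
          [:: Ssum r (n - 1)%N; J (R * N); K r (N - 1); 2 ^+ r * J (R * (N - 1))];
          [:: Ssum r (n - 2)%N; J (R * (N - 1)); K r (N - 2); 2 ^+ r * J (R * (N - 2))]].

Example J_check : [:: J 0; J 1; J 2; J 3; J 4; J (-1); J (-2); J (-3)]
  = [:: 0; 1; 1; 2; 5; 0; 1/2; -1/4].
Proof. by []. Qed.

From HB Require Import structures.
From mathcomp Require Import all_boot all_order all_algebra.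
From mathcomp Require Import ring zify.
Import GRing.Theory Num.Theory.
Local Open Scope ring_scope.

(* Binet's formula J_z = (2^(z+1) - c_z)/7 holds for all integers z, where the
   contribution c_z of the roots of x^2 + x + 1 has period 3.  Hence
   u_k = J_(rk) satisfies the linear recurrence with characteristic polynomial
   (x - 2^r)(x^2 - eps_r x + 1), whose companion matrix is the lower block of A_r.
   Each lower row of Q_(r,n) is a state (S_(r,N), u_(N+1), K_(r,N), 2^r u_N), and
   since K_(r,N) = u_(N+2) - (2^r + eps_r) u_(N+1), right multiplication by A_r
   turns it into the state for N + 1.  So Q_(r,n+1) = Q_(r,n) A_r, and
   Q_(r,1) = J_r A_r + 2^r J_(-r) is checked directly. *)

(* c_z; the values 2, -3, 1 make J_0 = 0, J_1 = J_2 = 1. *)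
Definition jcyc (z : int) : rat :=
  if (z %% 3)%Z == 0 then 2 else if (z %% 3)%Z == 1 then -3 else 1.

Definition jbinet (z : int) : rat := (2 * 2 ^ z - jcyc z) / 7.

Lemma jcyc_congr (x y : int) : (x = y %[mod 3])%Z -> jcyc x = jcyc y.
Proof. by rewrite /jcyc => ->. Qed.

(* omega_1^r and omega_2^r are the roots of x^2 - eps_r x + 1. *)
Lemma jcyc_rec (r : nat) (z : int) :
  jcyc (z + r%:Z + r%:Z) = eps r * jcyc (z + r%:Z) - jcyc z.
Proof.
have c_cases : (z %% 3 = 0 \/ z %% 3 = 1 \/ z %% 3 = 2)%Z by lia.
have s_cases : (r %% 3 = 0 \/ r %% 3 = 1 \/ r %% 3 = 2)%N by lia.
rewrite (@jcyc_congr z (z %% 3)%Z) ?(@jcyc_congr (z + r%:Z) ((z %% 3)%Z + (r %% 3)%N%:Z))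
        ?(@jcyc_congr (z + r%:Z + r%:Z) ((z %% 3)%Z + (r %% 3)%N%:Z + (r %% 3)%N%:Z)); try lia.
rewrite /eps /dvdn.
by case: c_cases => [->|[->|->]]; case: s_cases => [->|[->|->]].
Qed.

Lemma jbinet_rec (z : int) :
  jbinet (z + 3%:Z) = jbinet (z + 2%:Z) + jbinet (z + 1) + 2 * jbinet z.
Proof.
have cyc3 : jcyc (z + 3%:Z) = jcyc z by apply: jcyc_congr; lia.
have cyc2 : jcyc (z + 2%:Z) = - jcyc (z + 1) - jcyc z.
  by rewrite (_ : z + 2%:Z = z + 1%:Z + 1%:Z) ?jcyc_rec /eps /= ?mulN1r //; lia.
by rewrite /jbinet cyc3 cyc2 !expfzDr // expr1z; field.
Qed.

Lemma Jfwd_binet (n : nat) :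
  Jfwd n = (jbinet n, jbinet (n%:Z + 1), jbinet (n%:Z + 2%:Z)).
Proof.
elim: n => [|n IH]; first by congr (_, _, _); rewrite /jbinet /jcyc /=; field.
rewrite /= IH; congr (_, _, _); try by congr jbinet; lia.
by rewrite (_ : n.+1%:Z + 2%:Z = n%:Z + 3%:Z) ?jbinet_rec //; lia.
Qed.

Lemma Jbwd_binet (k : nat) :
  Jbwd k = (jbinet (- k%:Z), jbinet (- k%:Z + 1), jbinet (- k%:Z + 2%:Z)).
Proof.
elim: k => [|k IH]; first by congr (_, _, _); rewrite /jbinet /jcyc /=; field.
rewrite /= IH; congr (_, _, _); try by congr jbinet; lia.
have := jbinet_rec (- k.+1%:Z).
rewrite (_ : - k.+1%:Z + 3%:Z = - k%:Z + 2%:Z); last by lia.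
rewrite (_ : - k.+1%:Z + 2%:Z = - k%:Z + 1); last by lia.
rewrite (_ : - k.+1%:Z + 1 = - k%:Z); last by lia.
(* Naming the atoms keeps field from unfolding 2 ^ z. *)
move=> ->; set a := jbinet _; set b := jbinet _; set c := jbinet _; by field.
Qed.

Lemma J_binet (z : int) : J z = jbinet z.
Proof. by case: z => [n|k]; rewrite /J ?Jfwd_binet // Jbwd_binet NegzE. Qed.

Lemma J_mul_rec (r : nat) (k : int) :
  J (r%:Z * (k + 3%:Z)) = (2 ^+ r + eps r) * J (r%:Z * (k + 2%:Z))
    - (2 ^+ r * eps r + 1) * J (r%:Z * (k + 1)) + 2 ^+ r * J (r%:Z * k).
Proof.
rewrite !J_binet /jbinet.
rewrite (_ : r%:Z * (k + 3%:Z) = r%:Z * k + r%:Z + r%:Z + r%:Z); last by ring.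
rewrite (_ : r%:Z * (k + 2%:Z) = r%:Z * k + r%:Z + r%:Z); last by ring.
rewrite (_ : r%:Z * (k + 1) = r%:Z * k + r%:Z); last by ring.
rewrite (jcyc_rec r (r%:Z * k + r%:Z)) jcyc_rec !expfzDr //.
rewrite -[2 ^ r%:Z]/(2 ^+ r : rat).
set P := 2 ^ (r%:Z * k); set c0 := jcyc _; set c1 := jcyc _.
by field.
Qed.

Lemma J_mul_succ_K (r : nat) (N : int) :
  J (r%:Z * (N + 1 + 1)) = (2 ^+ r + eps r) * J (r%:Z * (N + 1)) + K r N.
Proof.
rewrite /K (_ : N + 1 + 1 = N - 1 + 3%:Z) ?J_mul_rec; last by lia.
rewrite (_ : N - 1 + 2%:Z = N + 1) ?subrK; last by lia.
by ring.
Qed.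

Arguments J : simpl never.

Definition Qrow (r : nat) (N : int) (s : rat) : 'rV[rat]_4 :=
  \row_j nth 0 [:: s; J (r%:Z * (N + 1)); K r N; 2 ^+ r * J (r%:Z * N)] j.

Lemma Qrow_mulA (r : nat) (N : int) (s : rat) :
  Qrow r N s *m A r = Qrow r (N + 1) (s + J (r%:Z * (N + 1))).
Proof.
apply/rowP => j; rewrite !mxE !big_ord_recr big_ord0 /= !mxE /=.
case: j => [[|[|[|[|j]]]] lt_j4] //=; rewrite ?J_mul_succ_K /K ?addrK; by ring.
Qed.

Lemma row_Q (r n : nat) (i : 'I_4) : (0 < i)%N ->
  row i (Q r n) = Qrow r (n%:Z - i.-1%:Z) (Ssum r (n - i.-1)).
Proof.
case: i => [[|[|[|[|i]]]] lt_i4] // _; apply/rowP => j; rewrite !mxE /=;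
  case: j => [[|[|[|[|j]]]] lt_j4] //=;
  first [ by rewrite subn0 | by congr (J (_ * _)); lia
        | by congr (_ * J (_ * _)); lia | by congr (K _ _); lia ].
Qed.

(* At p = 0 the predecessor is truncated; the identity still holds as J 0 = 0. *)
Lemma Ssum_pred (r p : nat) : Ssum r p = Ssum r p.-1 + J (r%:Z * p%:Z).
Proof.
case: p => [|p]; last by rewrite /Ssum big_nat_recr.
by rewrite /= mulr0 /J /= addr0.
Qed.

Lemma Q_mulA (r m : nat) : Q r m.+1 * A r = Q r m.+2.
Proof.
apply/row_matrixP => i; rewrite -mulmxE row_mul.
case: i => [[|k] lt_k4].
  apply/rowP => j; rewrite !mxE !big_ord_recr big_ord0 /= !mxE /=.
  by case: j => [[|[|[|[|j]]]] lt_j4] //=; ring.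
rewrite !row_Q //= Qrow_mulA (Ssum_pred r (m.+2 - k)).
congr (Qrow _ _ (Ssum _ _ + J (_ * _))); lia.
Qed.

Lemma Q1 (r : nat) : Q r 1 = J r%:Z *: A r + (2 ^+ r * J (- r%:Z)) *: 1.
Proof.
have J0 : J (r%:Z * 0) = 0 by rewrite mulr0.
have Ssum0 : Ssum r 0 = 0 by rewrite /Ssum big_nat1 muln0.
have K0 : K r 0 = 2 ^+ r * J (- r%:Z) by rewrite /K sub0r mulrN1 J0; ring.
have Km1 : K r (-1) = J r%:Z.
  by have := J_mul_succ_K r (-1); rewrite addNr add0r mulr1 J0 mulr0 add0r.
have J2 : J (r%:Z * (1%:Z + 1)) = (2 ^+ r + eps r) * J r%:Z + 2 ^+ r * J (- r%:Z).
  by have := J_mul_succ_K r 0; rewrite add0r mulr1 K0.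
have sub1_2 : (1 - 2 = 0)%N by [].
have one_minus_two : 1%:Z - 2 = -1 :> int by [].
apply/matrixP => i j; rewrite !mxE.
case: i => [[|[|[|[|i]]]] lt_i4] //; case: j => [[|[|[|[|j]]]] lt_j4] //=.
all: rewrite ?subnn ?sub1_2 ?subrr ?one_minus_two ?(Ssum_pred r 1) /= ?mulr1 ?mulrN1.
all: rewrite ?J2 ?Km1 ?K0 ?J0 ?Ssum0 /K ?subrr ?J0 ?mulr1; ring.
Qed.

Lemma Q_succ_pow (r n : nat) : Q r n.+1 = Q r 1 * A r ^+ n.
Proof.
elim: n => [|n IH]; first by rewrite expr0 mulr1.
by rewrite exprSr mulrA -IH Q_mulA.
Qed.

Theorem theorem1 (r n : nat) (hr : (1 <= r)%N) (hn : (2 <= n)%N) :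
  J r%:Z *: A r ^+ n + (2 ^+ r * J (- r%:Z)) *: A r ^+ n.-1 = Q r n.
Proof.
case: n hn => [|[|n]] // _.
by rewrite Q_succ_pow Q1 mulrDl -!scalerAl mul1r -exprS.
Qed.
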